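(* Let $(a_n)_{n\ge1}$ be real scalars and let $T_n\in(c_0)^*$ be given by $T_nx=a_nx_n$ for $x=(x_k)_{k\ge1}\in c_0$. Then $\mathcal{R}(\{T_n:n\ge1\})=\|a\|_{\ell^2}$ (both sides possibly infinite).
   Context: $c_0$ is the space of real null sequences with the sup norm. For a family $\mathscr{T}\subseteq\mathcal{L}(X,Y)$, the $R$-bound $\mathcal{R}(\mathscr{T})$ is the least $C\in[0,\infty]$ such that $(\mathbb{E}\|\sum_{n=1}^N r_nS_nx_n\|^2)^{1/2}\le C(\mathbb{E}\|\sum_{n=1}^N r_nx_n\|^2)^{1/2}$ for all $N$, all $S_1,\dots,S_N\in\mathscr{T}$ and all $x_1,\dots,x_N\in X$, where $(r_n)$ is a Rademacher sequence. *)

From Stdlib Require Import Reals Lra ClassicalEpsilon FunctionalExtensionality.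
Open Scope R_scope.

Inductive ereal : Type := Fin (r : R) | PInf.

Definition ereal_le (x y : ereal) : Prop :=
  match x, y with
  | _, PInf => True
  | PInf, Fin _ => False
  | Fin a, Fin b => a <= b
  end.

Fixpoint fsum (N : nat) (f : nat -> R) : R :=
  match N with
  | O => 0
  | S n => fsum n f + f n
  end.

(** c_0 : real null sequences (indexed by nat; index k stands for k+1). *)
Definition is_c0 (x : nat -> R) : Prop := Un_cv x 0.

(** Supremum norm sup_k |x k| (defined for bounded sequences; 0 otherwise,
    a value never used on c_0 since null sequences are bounded). *)
Definition supnorm (x : nat -> R) : R :=
  match excluded_middle_informative (bound (EUn (fun k => Rabs (x k)))) with
  | left Hb =>
      proj1_sig (completeness (EUn (fun k => Rabs (x k))) Hb
                   (ex_intro _ (Rabs (x 0%nat)) (ex_intro _ 0%nat eq_refl)))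
  | right _ => 0
  end.

(** Expectation over a Rademacher sequence r_0, ..., r_(N-1):
    average of F over the 2^N sign vectors (r_i in {1,-1}, i < N). *)
Definition upd (e : nat -> R) (n : nat) (v : R) : nat -> R :=
  fun k => if Nat.eqb k n then v else e k.

Fixpoint rad_exp (N : nat) (F : (nat -> R) -> R) : R :=
  match N with
  | O => F (fun _ => 0)
  | S n => (rad_exp n (fun e => F (upd e n 1))
            + rad_exp n (fun e => F (upd e n (-1)))) / 2
  end.

(** Bounded linear operators c_0 -> R, represented as functions on sequences. *)
Definition op := (nat -> R) -> R.

(** C (in [0,oo]) satisfies the R-bound inequality for the family [fam]
    of operators c_0 -> R (norm of R = absolute value). *)
Definition Rbound_ok (fam : op -> Prop) (C : ereal) : Prop :=
  match C with
  | PInf => True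
  | Fin c =>
      0 <= c /\
      forall (N : nat) (S : nat -> op) (x : nat -> nat -> R),
        (forall i, (i < N)%nat -> fam (S i)) ->
        (forall i, (i < N)%nat -> is_c0 (x i)) ->
        sqrt (rad_exp N (fun r => (Rabs (fsum N (fun i => r i * S i (x i)))) ^ 2))
        <= c * sqrt (rad_exp N (fun r => (supnorm (fun k => fsum N (fun i => r i * x i k))) ^ 2))
  end.

Definition is_Rbound (fam : op -> Prop) (C : ereal) : Prop :=
  Rbound_ok fam C /\ forall D, Rbound_ok fam D -> ereal_le C D.

Definition l2norm (a : nat -> R) : ereal :=
  match excluded_middle_informative
          (exists l, Un_cv (fun N => fsum N (fun n => a n ^ 2)) l) with
  | left H =>
      Fin (sqrt (proj1_sig (constructive_indefinite_description _ H)))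
  | right _ => PInf
  end.

Definition Tdiag (a : nat -> R) (n : nat) : op := fun x => a n * x n.

(* The upper bound: after testing the point evaluation at a coordinate k,
   Khintchine's identity E|sum_i r_i c_i|^2 = sum_i c_i^2 (exact for Rademacher
   signs) gives sum_i x_i(k)^2 <= E||sum_i r_i x_i||^2 for every k.  Grouping the
   indices i by the operator T_(n_i) they use, E|sum_i r_i a_(n_i) x_i(n_i)|^2 =
   sum_i a_(n_i)^2 x_i(n_i)^2 <= sum_k a_k^2 sum_i x_i(k)^2 <= ||a||^2 E||sum_i r_i x_i||^2.
   The lower bound: on the unit vectors e_0, ..., e_(N-1), every sign combination
   has norm 1, while the left side equals sum_(n<N) a_n^2. *)
From Stdlib Require Import Reals Lra Lia FunctionalExtensionality ClassicalEpsilon.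
Open Scope R_scope.

Lemma fsum_ext N f g : (forall i, (i < N)%nat -> f i = g i) -> fsum N f = fsum N g.
Proof.
  induction N as [|N IH]; simpl; intros H; [reflexivity|].
  rewrite IH by (intros; apply H; lia). rewrite H by lia. reflexivity.
Qed.

Lemma fsum_le N f g : (forall i, (i < N)%nat -> f i <= g i) -> fsum N f <= fsum N g.
Proof.
  induction N as [|N IH]; simpl; intros H; [lra|].
  assert (fsum N f <= fsum N g) by (apply IH; intros; apply H; lia).
  assert (f N <= g N) by (apply H; lia). lra.
Qed.

Lemma fsum_add N f g : fsum N (fun i => f i + g i) = fsum N f + fsum N g.
Proof. induction N as [|N IH]; simpl; [lra|]. rewrite IH; ring. Qed.

Lemma fsum_mulr N f c : fsum N (fun i => f i * c) = fsum N f * c.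
Proof. induction N as [|N IH]; simpl; [ring|]. rewrite IH; ring. Qed.

Lemma fsum_ge0 N f : (forall i, 0 <= f i) -> 0 <= fsum N f.
Proof.
  induction N as [|N IH]; simpl; intros H; [lra|].
  specialize (IH H). specialize (H N). lra.
Qed.

Lemma fsum_ge_term N f j : (forall i, 0 <= f i) -> (j < N)%nat -> f j <= fsum N f.
Proof.
  induction N as [|N IH]; simpl; intros H Hj; [lia|].
  destruct (Nat.eq_dec j N) as [->|Hne].
  - pose proof (fsum_ge0 N f H). lra.
  - assert (f j <= fsum N f) by (apply IH; auto; lia). specialize (H N). lra.
Qed.

Lemma fsum_reindex_le N B (w : nat -> R) (y : nat -> nat -> R) (n : nat -> nat) :
  (forall k, 0 <= w k) -> (forall i k, 0 <= y i k) ->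
  (forall i, (i < N)%nat -> (n i < B)%nat) ->
  fsum N (fun i => w (n i) * y i (n i)) <= fsum B (fun k => w k * fsum N (fun i => y i k)).
Proof.
  intros Hw Hy. induction N as [|N IH]; simpl; intros Hn.
  - rewrite (fsum_ext B _ (fun _ => 0 * 0)) by (intros; ring).
    rewrite fsum_mulr. lra.
  - rewrite (fsum_ext B _ (fun k => w k * fsum N (fun i => y i k) + w k * y N k))
      by (intros; ring).
    rewrite fsum_add.
    assert (fsum N (fun i => w (n i) * y i (n i))
            <= fsum B (fun k => w k * fsum N (fun i => y i k)))
      by (apply IH; intros; apply Hn; lia).
    assert (w (n N) * y N (n N) <= fsum B (fun k => w k * y N k)).
    { apply (fsum_ge_term B (fun k => w k * y N k)); [|apply Hn; lia].
      intros; apply Rmult_le_pos; auto. }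
    lra.
Qed.

Lemma exists_strict_upper_bound N (n : nat -> nat) :
  exists B, forall i, (i < N)%nat -> (n i < B)%nat.
Proof.
  induction N as [|N [B HB]]; [exists 0%nat; intros; lia|].
  exists (Nat.max B (S (n N))). intros i Hi.
  destruct (Nat.eq_dec i N) as [->|Hne]; [lia|].
  specialize (HB i ltac:(lia)). lia.
Qed.

Lemma rad_exp_ext N F G : (forall e, F e = G e) -> rad_exp N F = rad_exp N G.
Proof. intros H. rewrite (functional_extensionality F G H). reflexivity. Qed.

Lemma rad_exp_const N c : rad_exp N (fun _ => c) = c.
Proof. induction N as [|N IH]; simpl; [reflexivity|]. rewrite IH. field. Qed.

(* Only sign vectors bounded by 1 are ever evaluated: [upd] installs +-1 and the
   base vector is 0. *)
Lemma rad_exp_le N : forall F G,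
  (forall e, (forall k, Rabs (e k) <= 1) -> F e <= G e) -> rad_exp N F <= rad_exp N G.
Proof.
  induction N as [|N IH]; simpl; intros F G H.
  - apply H. intros; rewrite Rabs_R0; lra.
  - assert (Hupd : forall e v, Rabs v = 1 -> (forall k, Rabs (e k) <= 1) ->
                   forall k, Rabs (upd e N v k) <= 1).
    { intros e v Hv He k. unfold upd. destruct (Nat.eqb k N); [lra|apply He]. }
    assert (Hm1 : Rabs (-1) = 1) by (rewrite Rabs_left; lra).
    assert (rad_exp N (fun e => F (upd e N 1)) <= rad_exp N (fun e => G (upd e N 1)))
      by (apply IH; intros e He; apply H, Hupd; auto; apply Rabs_R1).
    assert (rad_exp N (fun e => F (upd e N (-1))) <= rad_exp N (fun e => G (upd e N (-1))))
      by (apply IH; intros e He; apply H, Hupd; auto).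
    lra.
Qed.

Lemma fsum_upd_signs n e v c :
  fsum n (fun i => upd e n v i * c i) = fsum n (fun i => e i * c i).
Proof.
  apply fsum_ext. intros i Hi. unfold upd.
  destruct (Nat.eqb i n) eqn:E; [apply Nat.eqb_eq in E; lia|reflexivity].
Qed.

(* The cross terms b * c_N and c_i * c_N cancel between the signs +1 and -1. *)
Lemma rad_exp_square_affine N c : forall b,
  rad_exp N (fun r => (b + fsum N (fun i => r i * c i)) ^ 2) = b ^ 2 + fsum N (fun i => c i ^ 2).
Proof.
  induction N as [|N IH]; intro b; cbn [rad_exp fsum]; [ring|].
  assert (Hv : forall v, rad_exp N (fun e =>
             (b + (fsum N (fun i => upd e N v i * c i) + upd e N v N * c N)) ^ 2)
           = (b + v * c N) ^ 2 + fsum N (fun i => c i ^ 2)).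
  { intro v. rewrite <- IH. apply rad_exp_ext. intro e. rewrite fsum_upd_signs.
    unfold upd. rewrite Nat.eqb_refl. ring. }
  rewrite !Hv. field.
Qed.

Lemma rad_exp_square N c :
  rad_exp N (fun r => Rabs (fsum N (fun i => r i * c i)) ^ 2) = fsum N (fun i => c i ^ 2).
Proof.
  rewrite <- (Rplus_0_l (fsum N _)), <- (pow_i 2 ltac:(lia)), <- rad_exp_square_affine.
  apply rad_exp_ext. intro e. rewrite pow2_abs. f_equal. ring.
Qed.

Lemma Un_cv_const c : Un_cv (fun _ => c) c.
Proof. intros eps He. exists 0%nat. intros. unfold R_dist. rewrite Rminus_diag, Rabs_R0. lra. Qed.

Lemma is_c0_fsum N r x : (forall i, (i < N)%nat -> is_c0 (x i)) ->
  is_c0 (fun k => fsum N (fun i => r i * x i k)).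
Proof.
  unfold is_c0. induction N as [|N IH]; simpl; intros H; [apply Un_cv_const|].
  replace 0 with (0 + r N * 0) by ring.
  apply CV_plus; [apply IH; intros; apply H; lia|].
  apply CV_mult; [apply Un_cv_const|apply H; lia].
Qed.

Lemma Rabs_le_supnorm y k : is_c0 y -> Rabs (y k) <= supnorm y.
Proof.
  intros Hy. unfold supnorm.
  destruct (excluded_middle_informative _) as [Hb|Hnb].
  - destruct (completeness _ _ _) as [s Hs]. apply (proj1 Hs). exists k. reflexivity.
  - exfalso. apply Hnb, cauchy_bound, CV_Cauchy. exists 0.
    rewrite <- Rabs_R0. apply cv_cvabs, Hy.
Qed.

Lemma supnorm_le1 y : (forall k, Rabs (y k) <= 1) -> 0 <= supnorm y <= 1.
Proof.
  intros Hy. unfold supnorm.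
  destruct (excluded_middle_informative _) as [Hb|Hnb]; [|lra].
  destruct (completeness _ _ _) as [s Hs]. simpl. destruct Hs as [Hs Hl]. split.
  - apply Rle_trans with (Rabs (y 0%nat)); [apply Rabs_pos|]. apply Hs. exists 0%nat; reflexivity.
  - apply Hl. intros z [i ->]. apply Hy.
Qed.

Lemma fsum_sq_le_rad_exp_supnorm N x k : (forall i, (i < N)%nat -> is_c0 (x i)) ->
  fsum N (fun i => x i k ^ 2)
  <= rad_exp N (fun r => supnorm (fun k => fsum N (fun i => r i * x i k)) ^ 2).
Proof.
  intros Hx. rewrite <- (rad_exp_square N (fun i => x i k)).
  apply rad_exp_le. intros e _.
  rewrite <- (pow2_abs (supnorm _)). apply pow_incr. split; [apply Rabs_pos|].
  eapply Rle_trans; [|apply Rle_abs].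
  apply (Rabs_le_supnorm (fun k => fsum N (fun i => e i * x i k))), is_c0_fsum, Hx.
Qed.

Definition unit_vec (i : nat) : nat -> R := fun k => if Nat.eqb k i then 1 else 0.

Lemma is_c0_unit_vec i : is_c0 (unit_vec i).
Proof.
  intros eps He. exists (S i). intros n Hn. unfold R_dist, unit_vec.
  destruct (Nat.eqb n i) eqn:E; [apply Nat.eqb_eq in E; lia|].
  rewrite Rminus_diag, Rabs_R0. lra.
Qed.

Lemma fsum_unit_vec N e k :
  fsum N (fun i => e i * unit_vec i k) = if Nat.ltb k N then e k else 0.
Proof.
  induction N as [|N IH]; cbn [fsum]; [reflexivity|]. rewrite IH. unfold unit_vec.
  destruct (Nat.eqb_spec k N) as [->|Hne].
  - rewrite (proj2 (Nat.ltb_ge N N)), (proj2 (Nat.ltb_lt N (S N))) by lia. ring.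
  - destruct (Nat.ltb_spec k N); destruct (Nat.ltb_spec k (S N)); try lia; ring.
Qed.

Lemma rad_exp_supnorm_unit_vec_le1 N :
  rad_exp N (fun r => supnorm (fun k => fsum N (fun i => r i * unit_vec i k)) ^ 2) <= 1.
Proof.
  rewrite <- (rad_exp_const N 1). apply rad_exp_le. intros e He.
  destruct (supnorm_le1 (fun k => fsum N (fun i => e i * unit_vec i k))).
  - intro k. rewrite fsum_unit_vec. destruct (Nat.ltb k N); [apply He|rewrite Rabs_R0; lra].
  - rewrite <- (pow1 2). apply pow_incr. lra.
Qed.

Section DiagonalFunctionals.

Variable a : nat -> R.

Let fam : op -> Prop := fun S => exists n : nat, S = Tdiag a n.

Lemma growing_fsum_sq : Un_growing (fun N => fsum N (fun n => a n ^ 2)).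
Proof. intro n. simpl. pose proof (pow2_ge_0 (a n)). lra. Qed.

Lemma Rbound_ok_Tdiag L : 0 <= L -> (forall B, fsum B (fun k => a k ^ 2) <= L) ->
  Rbound_ok fam (Fin (sqrt L)).
Proof.
  intros HL HaL. split; [apply sqrt_pos|]. intros N S x HS Hx.
  set (M := rad_exp N (fun r => supnorm (fun k => fsum N (fun i => r i * x i k)) ^ 2)).
  assert (HxM : forall k, fsum N (fun i => x i k ^ 2) <= M)
    by (intro k; apply fsum_sq_le_rad_exp_supnorm, Hx).
  pose (n i := epsilon (inhabits 0%nat) (fun n => S i = Tdiag a n)).
  assert (Hn : forall i, (i < N)%nat -> S i = Tdiag a (n i))
    by (intros i Hi; exact (epsilon_spec _ (fun n => S i = Tdiag a n) (HS i Hi))).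
  destruct (exists_strict_upper_bound N n) as [B HB].
  assert (HM0 : 0 <= M).
  { eapply Rle_trans; [|apply (HxM 0%nat)]. apply fsum_ge0; intros; apply pow2_ge_0. }
  rewrite rad_exp_square, <- sqrt_mult by assumption.
  apply sqrt_le_1_alt.
  rewrite (fsum_ext N _ (fun i => a (n i) ^ 2 * x i (n i) ^ 2))
    by (intros i Hi; rewrite Hn by exact Hi; unfold Tdiag; ring).
  eapply Rle_trans.
  { apply (fsum_reindex_le N B (fun k => a k ^ 2) (fun i k => x i k ^ 2) n);
      auto; intros; apply pow2_ge_0. }
  eapply Rle_trans.
  { apply (fsum_le B _ (fun k => a k ^ 2 * M)).
    intros; apply Rmult_le_compat_l; [apply pow2_ge_0|apply HxM]. }
  rewrite fsum_mulr. apply Rmult_le_compat_r; [exact HM0|apply HaL].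
Qed.

Lemma Rbound_ok_Tdiag_fsum_le d : Rbound_ok fam (Fin d) ->
  forall N, fsum N (fun n => a n ^ 2) <= d ^ 2.
Proof.
  intros [Hd H] N.
  specialize (H N (fun i => Tdiag a i) unit_vec
                (fun i _ => ex_intro _ i eq_refl) (fun i _ => is_c0_unit_vec i)).
  rewrite rad_exp_square in H.
  rewrite (fsum_ext N _ (fun n => a n ^ 2)) in H
    by (intros i _; unfold Tdiag, unit_vec; rewrite Nat.eqb_refl; ring).
  assert (Hsq : sqrt (fsum N (fun n => a n ^ 2)) <= sqrt (d ^ 2)).
  { rewrite sqrt_pow2 by exact Hd. eapply Rle_trans; [exact H|].
    rewrite <- (Rmult_1_r d) at 2. apply Rmult_le_compat_l; [exact Hd|].
    rewrite <- sqrt_1. apply sqrt_le_1_alt, rad_exp_supnorm_unit_vec_le1. }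
  apply sqrt_le_0; [apply fsum_ge0; intros; apply pow2_ge_0|apply pow2_ge_0|exact Hsq].
Qed.

End DiagonalFunctionals.

Theorem mainTheorem5 (a : nat -> R) :
  is_Rbound (fun S => exists n : nat, S = Tdiag a n) (l2norm a).
Proof.
  unfold l2norm. destruct (excluded_middle_informative _) as [Hex|Hdiv].
  - destruct (constructive_indefinite_description _ Hex) as [l Hl]. simpl.
    pose proof (growing_ineq _ _ (growing_fsum_sq a) Hl) as Hle.
    split; [apply Rbound_ok_Tdiag; [apply (Hle 0%nat)|exact Hle]|].
    intros [d|] HD; simpl; [|exact I].
    pose proof (Rbound_ok_Tdiag_fsum_le a d HD) as Hlow.
    rewrite <- (sqrt_pow2 d) by apply HD.
    apply sqrt_le_1_alt, (Rle_cv_lim Hlow Hl (Un_cv_const _)).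
  - split; [exact I|]. intros [d|] HD; simpl; [|exact I].
    apply Hdiv. destruct (growing_cv _ (growing_fsum_sq a)) as [l Hl].
    + exists (d ^ 2). intros z [n ->]. apply (Rbound_ok_Tdiag_fsum_le a d HD).
    + exists l; exact Hl.
Qed.
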